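(* For every $\tau\ge0$, let $\rho_\tau=\{(x,v)\in\mathcal{H}:v=\tau\}$. Then $d_H((0,1),\rho_\tau):=\inf_{P\in\rho_\tau}d_H((0,1),P)=2|\sqrt\tau-1|$.
   Context: Let $\mathcal{H}=\{(x,v)\in\mathbb{R}^2:v\ge0\}$ and let $d_H$ be the Riemannian distance on $\mathcal{H}$ induced by the metric $ds^2=v^{-1}(dx^2+dv^2)$ on the open upper half-plane (extended to the boundary $v=0$). *)

From HB Require Import structures.
From mathcomp Require Import all_boot all_order all_algebra.
From mathcomp Require Import all_classical all_reals all_analysis.
Set Implicit Arguments. Unset Strict Implicit. Unset Printing Implicit Defensive.
Import Order.TTheory GRing.Theory Num.Theory.
Import numFieldNormedType.Exports.
Local Open Scope classical_set_scope.
Local Open Scope ring_scope.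

Definition halfplane (R : realType) : set (R * R) := [set P | 0 <= P.2].

Definition admissible_curve (R : realType) (x v : R -> R) : Prop :=
  {within `[0, 1]%classic, continuous x} /\
  {within `[0, 1]%classic, continuous v} /\
  (forall t : R, 0 < t < 1 ->
     [/\ derivable x t 1, derivable v t 1,
         {for t, continuous (derive1 x)}, {for t, continuous (derive1 v)} & 0 < v t]).

(* Riemannian length for ds^2 = v^{-1}(dx^2 + dv^2). *)
Definition hyp_speed (R : realType) (x v : R -> R) (t : R) : R :=
  Num.sqrt ((derive1 x t) ^+ 2 + (derive1 v t) ^+ 2) / Num.sqrt (v t).

Definition hyp_length (R : realType) (x v : R -> R) : \bar R :=
  (\int[@lebesgue_measure R]_(t in `]0%R, 1%R[%classic) (hyp_speed x v t)%:E)%E.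

Definition dH (R : realType) (P Q : R * R) : \bar R :=
  ereal_inf [set l : \bar R | exists x v : R -> R,
     [/\ admissible_curve x v, (x 0, v 0) = P, (x 1, v 1) = Q
        & l = hyp_length x v]].

Definition rho (R : realType) (tau : R) : set (R * R) :=
  [set P : R * R | halfplane P /\ P.2 = tau].

Definition dH_set (R : realType) (P : R * R) (A : set (R * R)) : \bar R :=
  ereal_inf [set dH P Q | Q in A].

From HB Require Import structures.
From mathcomp Require Import all_boot all_order all_algebra.
From mathcomp Require Import all_classical all_reals all_analysis.
From mathcomp Require Import lra ring measurable_realfun.
Set Implicit Arguments. Unset Strict Implicit. Unset Printing Implicit Defensive.
Import Order.TTheory GRing.Theory Num.Theory.
Import numFieldNormedType.Exports.
Local Open Scope classical_set_scope.
Local Open Scope ring_scope.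

(** In the metric v^{-1}(dx^2 + dv^2), the speed of a curve dominates
  |v'| / sqrt v = |(2 sqrt v)'|, so by the fundamental theorem of calculus every
  curve from P to Q has length at least 2 |sqrt Q.2 - sqrt P.2|.  The vertical
  curve along which 2 sqrt v grows linearly has exactly that length, so the
  distance from (0,1) to the line v = tau is attained at (0,tau). *)

Lemma continuous_itv_absB_le (R : realType) (F : R -> R) (l u r : R) : l < u ->
  {within `[l, u], continuous F} ->
  (forall a b, l < a -> a < b -> b < u -> `|F b - F a| <= r) ->
  `|F u - F l| <= r.
Proof.
move=> lu cF Fr; have [_ cl cu] := (continuous_within_itvP _ lu).1 cF.
apply/ler_addgt0Pr => e e0.
have e2 : 0 < e / 2 by lra.
move/cvgrPdist_lt : cl => /(_ _ e2) Nl.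
move/cvgrPdist_lt : cu => /(_ _ e2) Nu.
have : \forall t \near l^'+, l < t /\ t < (l + u) / 2 /\ `|F l - F t| < e / 2.
  near=> t; split; first by near: t; exact: nbhs_right_gt.
  split; last by near: t; exact: Nl.
  by near: t; apply: nbhs_right_lt; lra.
move=> /filter_ex [a [la [a_mid Fa]]].
have : \forall t \near u^'-, (l + u) / 2 < t /\ t < u /\ `|F u - F t| < e / 2.
  near=> t; split; first by near: t; apply: nbhs_left_gt; lra.
  split; last by near: t; exact: Nu.
  by near: t; exact: nbhs_left_lt.
move=> /filter_ex [b [mid_b [bu Fb]]].
have := Fr a b la ltac:(lra) bu.
have := ler_distD (F b) (F u) (F l).
have := ler_distD (F a) (F b) (F l).
rewrite (distrC (F a)); lra.
Unshelve. all: by end_near.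
Qed.

Lemma derivable1_continuous (R : realType) (f : R -> R) (t : R) :
  derivable f t 1 -> {for t, continuous f}.
Proof. by move=> df; apply/differentiable_continuous/derivable1_diffP. Qed.

Lemma continuous_sqrt_comp (R : realType) (f : R -> R) (t : R) :
  {for t, continuous f} -> {for t, continuous (fun s => Num.sqrt (f s))}.
Proof. by move=> cf; apply: (continuous_comp cf); exact: sqrt_continuous. Qed.

Lemma is_derive_double_sqrt (R : realType) (f : R -> R) (t : R) :
  derivable f t 1 -> 0 < f t ->
  is_derive t 1 (fun s => 2 * Num.sqrt (f s)) (derive1 f t / Num.sqrt (f t)).
Proof.
move=> df ft_gt0.
have dsqrt : is_derive (f t) 1 (fun y : R => 2 * Num.sqrt y)
    (2 * (2 * Num.sqrt (f t))^-1).
  exact: (is_deriveZ 2 (is_derive1_sqrt ft_gt0)).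
have dft : is_derive t 1 f (derive1 f t) by apply: DeriveDef; rewrite ?derive1E.
have sqrt_gt0 : 0 < Num.sqrt (f t) by rewrite sqrtr_gt0.
have -> : derive1 f t / Num.sqrt (f t)
    = 2 * (2 * Num.sqrt (f t))^-1 * derive1 f t.
  by field; rewrite gt_eqF.
exact: is_derive1_comp dsqrt dft.
Qed.

Lemma hyp_speed_ge0 (R : realType) (x v : R -> R) (t : R) :
  0 <= hyp_speed x v t.
Proof. by rewrite divr_ge0 ?sqrtr_ge0. Qed.

Lemma hyp_length_ge0 (R : realType) (x v : R -> R) : (0 <= hyp_length x v)%E.
Proof. by apply: integral_ge0 => t _; rewrite lee_fin hyp_speed_ge0. Qed.

Lemma abs_derive_div_sqrt_le_hyp_speed (R : realType) (x v : R -> R) (t : R) :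
  `|derive1 v t / Num.sqrt (v t)| <= hyp_speed x v t.
Proof.
rewrite normrM normfV (ger0_norm (sqrtr_ge0 _)).
apply: ler_wpM2r; first by rewrite invr_ge0 sqrtr_ge0.
rewrite -sqrtr_sqr; apply: ler_wsqrtr.
by rewrite lerDr sqr_ge0.
Qed.

Lemma continuous_itv01_measurable (R : realType) (f : R -> R) :
  (forall t, 0 < t < 1 -> {for t, continuous f}) ->
  measurable_fun (`]0, 1[ : set R) f.
Proof.
move=> cf; apply: open_continuous_measurable_fun; first exact: interval_open.
by move=> t; rewrite inE /= in_itv => /cf.
Qed.

Section AdmissibleCurve.

Variables (R : realType) (x v : R -> R).
Hypothesis adm : admissible_curve x v.

Let F (t : R) : R := 2 * Num.sqrt (v t).
Let F' (t : R) : R := derive1 v t / Num.sqrt (v t).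

Lemma continuous_hyp_speed (t : R) :
  0 < t < 1 -> {for t, continuous (hyp_speed x v)}.
Proof.
have [_ [_ /(_ t) adm_t]] := adm; move=> /adm_t [_ dv cdx cdv vt].
apply: continuousM.
  apply: continuous_sqrt_comp.
  by apply: continuousD; apply: continuousM.
apply: continuousV; first by rewrite gt_eqF // sqrtr_gt0.
exact/continuous_sqrt_comp/derivable1_continuous.
Qed.

Let continuous_F' (t : R) : 0 < t < 1 -> {for t, continuous F'}.
Proof.
have [_ [_ /(_ t) adm_t]] := adm; move=> /adm_t [_ dv _ cdv vt].
apply: continuousM => //.
apply: continuousV; first by rewrite gt_eqF // sqrtr_gt0.
exact/continuous_sqrt_comp/derivable1_continuous.
Qed.

Let is_derive_F (t : R) : 0 < t < 1 -> is_derive t 1 F (F' t).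
Proof.
have [_ [_ /(_ t) adm_t]] := adm; move=> /adm_t [_ dv _ _ vt].
exact: is_derive_double_sqrt.
Qed.

Let F_variation_le_hyp_length (a b : R) : 0 < a -> a < b -> b < 1 ->
  (`|F b - F a|%:E <= hyp_length x v)%E.
Proof.
move=> a_gt0 ab b_lt1.
have ab_sub : `[a, b] `<=` `]0, 1[.
  by move=> t /=; rewrite !in_itv /= => /andP[ta tb]; apply/andP; split; lra.
have ab_in t : t \in `]a, b[ -> 0 < t < 1.
  by rewrite in_itv /= => /andP[ta tb]; apply/andP; split; lra.
have cF' : {within `[a, b], continuous F'}.
  apply: continuous_in_subspaceT => t; rewrite inE => /ab_sub /=.
  by rewrite in_itv => /continuous_F'.
have dF : derivable_oo_LRcontinuous F a b.
  have cF t : 0 < t < 1 -> {for t, continuous F}.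
    by move=> /is_derive_F dFt; apply/derivable1_continuous/ex_derive.
  split.
  - by move=> t /ab_in /is_derive_F dFt; exact: ex_derive.
  - by apply/cvg_at_right_filter/cF; apply/andP; split; lra.
  - by apply/cvg_at_left_filter/cF; apply/andP; split; lra.
have F'E : {in `]a, b[, F^`()%classic =1 F'}.
  by move=> t /ab_in /is_derive_F dFt; rewrite derive1E derive_val.
have mF' := measurable_funS (measurable_itv `]0, 1[) ab_sub
  (continuous_itv01_measurable continuous_F').
have mspeed := continuous_itv01_measurable continuous_hyp_speed.
rewrite -abse_EFin EFinB -(continuous_FTC2 ab cF' dF F'E).
have abs_le_speed : (\int[lebesgue_measure]_(t in `[a, b]) `|(F' t)%:E|
    <= \int[lebesgue_measure]_(t in `[a, b]) (hyp_speed x v t)%:E)%E.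
  apply: ge0_le_integral => //.
  - exact/(measurableT_comp (@abse_measurable R setT))/measurable_EFinP.
  - apply/measurable_EFinP.
    exact: measurable_funS (measurable_itv `]0, 1[) ab_sub mspeed.
  - by move=> t _; rewrite lee_fin abs_derive_div_sqrt_le_hyp_speed.
apply: le_trans (le_abse_integral _ _ _) _ => //; first exact/measurable_EFinP.
apply: le_trans abs_le_speed _.
apply: ge0_subset_integral => //; first exact/measurable_EFinP.
by move=> t _; rewrite lee_fin hyp_speed_ge0.
Qed.

Lemma hyp_length_ge_sqrt_dist :
  ((2 * `|Num.sqrt (v 1) - Num.sqrt (v 0)|)%:E <= hyp_length x v)%E.
Proof.
have [_ [cv _]] := adm.
have cF : {within `[0, 1], continuous F}.
  have c2sqrt : continuous (fun y : R => 2 * Num.sqrt y).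
    move=> y.
    exact: continuousM (@cst_continuous R R 2 y) (@sqrt_continuous R y).
  by move=> t; exact: continuous_comp (cv t) (c2sqrt _).
have := hyp_length_ge0 x v.
case Lr: (hyp_length x v) => [r||] // _; last exact: leey.
have -> : 2 * `|Num.sqrt (v 1) - Num.sqrt (v 0)| = `|F 1 - F 0|.
  by rewrite /F -mulrBr normrM (ger0_norm (ler0n _ 2)).
rewrite lee_fin.
apply: (continuous_itv_absB_le ltr01 cF) => a b a_gt0 ab b_lt1.
by rewrite -lee_fin -Lr; exact: F_variation_le_hyp_length.
Qed.

End AdmissibleCurve.

Lemma dH_ge_sqrt_dist (R : realType) (P Q : R * R) :
  ((2 * `|Num.sqrt Q.2 - Num.sqrt P.2|)%:E <= dH P Q)%E.
Proof.
apply: le_ereal_inf_tmp => _ [x [v [adm <- <- ->]]].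
exact: hyp_length_ge_sqrt_dist.
Qed.

Lemma is_derive_affine (R : realType) (p c t : R) :
  is_derive t 1 (fun u : R => p + u * c) c.
Proof.
have dpc := is_deriveD (@is_derive_cst R R R p t 1)
  (is_deriveM (is_derive_id t 1) (@is_derive_cst R R R c t 1)).
by apply: (is_derive_eq dpc); rewrite scaler0 !add0r /cst scaler1.
Qed.

Section VerticalSegment.

Variables (R : realType) (x0 a b : R).
Hypotheses (a_gt0 : 0 < a) (b_ge0 : 0 <= b).

Let c : R := Num.sqrt b - Num.sqrt a.
Let q (u : R) : R := Num.sqrt a + u * c.
Let v (u : R) : R := q u ^+ 2.

Let q_gt0 (u : R) : 0 <= u -> u < 1 -> 0 < q u.
Proof.
move=> u_ge0 u_lt1.
have : 0 < (1 - u) * Num.sqrt a by rewrite mulr_gt0 ?sqrtr_gt0 // subr_gt0.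
have := mulr_ge0 u_ge0 (sqrtr_ge0 b).
rewrite /q /c; lra.
Qed.

Let is_derive_v (t : R) : is_derive t 1 v (2 * q t * c).
Proof.
have dq2 := is_deriveX 2 (is_derive_affine (Num.sqrt a) c t).
by apply: (is_derive_eq dq2); rewrite /GRing.scale /= /q; ring.
Qed.

Let derive1_x0 : derive1 (cst x0) = cst 0.
Proof. by apply/funext => t; exact: derive1_cst. Qed.

Let derive1_v : derive1 v = fun t => 2 * q t * c.
Proof.
by apply/funext => t; have dv := is_derive_v t; rewrite derive1E derive_val.
Qed.

Lemma vertical_segment_admissible : admissible_curve (cst x0) v.
Proof.
have cv : continuous v by move=> t; apply/derivable1_continuous/ex_derive.
split; first exact/continuous_subspaceT/cst_continuous.
split; first exact: continuous_subspaceT.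
move=> t /andP[t_gt0 t_lt1]; split.
- exact: derivable_cst.
- exact: ex_derive.
- by rewrite derive1_x0; exact: cst_continuous.
- have cq : {for t, continuous q}.
    by apply: derivable1_continuous; apply: ex_derive; exact: is_derive_affine.
  rewrite derive1_v.
  apply: continuousM (@cst_continuous R R c t).
  exact: continuousM (@cst_continuous R R 2 t) cq.
- by rewrite exprn_gt0 // q_gt0 // ltW.
Qed.

Lemma vertical_segment_hyp_length : hyp_length (cst x0) v = (2 * `|c|)%:E.
Proof.
rewrite /hyp_length (@eq_integral _ _ _ _ _ (fun=> (2 * `|c|)%:E)).
  by rewrite integral_cst //= lebesgue_measure_itv /= lte01 oppr0 adde0 mule1.
move=> u; rewrite inE /= in_itv /= => /andP[u_gt0 u_lt1]; congr EFin.
have qu_gt0 := q_gt0 (ltW u_gt0) u_lt1.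
rewrite /hyp_speed derive1_x0 derive1_v /v expr0n add0r !sqrtr_sqr.
rewrite !normrM (gtr0_norm qu_gt0) (ger0_norm (ler0n _ 2)).
by field; rewrite gt_eqF.
Qed.

Lemma dH_vertical : dH (x0, a) (x0, b) = (2 * `|Num.sqrt b - Num.sqrt a|)%:E.
Proof.
apply/eqP; rewrite eq_le; apply/andP; split; last first.
  exact: (dH_ge_sqrt_dist (x0, a)).
apply: ge_ereal_inf; exists (2 * `|c|)%:E => //.
exists (cst x0), v; split.
- exact: vertical_segment_admissible.
- by rewrite /v /q mul0r addr0 sqr_sqrtr // ltW.
- by rewrite /v /q mul1r /c addrC subrK sqr_sqrtr.
- by rewrite vertical_segment_hyp_length.
Qed.

End VerticalSegment.

Theorem theorem2p4 (R : realType) (tau : R) (htau : 0 <= tau) :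
  dH_set (0, 1) (rho tau) = (2 * `|Num.sqrt tau - 1|)%:E.
Proof.
apply/eqP; rewrite eq_le; apply/andP; split.
  apply: ge_ereal_inf; exists (dH (0, 1) (0, tau)); first by exists (0, tau).
  by rewrite dH_vertical ?sqrtr1.
apply: le_ereal_inf_tmp => _ [Q [_ <-] <-].
by have := dH_ge_sqrt_dist (0, 1) Q; rewrite sqrtr1.
Qed.
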